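(* Let $m\in\mathbb{N}$, let $f_0,\dots,f_m\in\mathbb{C}[[z]]$ be in general position, let $n\ge m-1$, and write $n=m-1+(m+1)k+\ell$ with $\ell\in\{0,\dots,m\}$, $k\in\{0,1,2,\dots\}$. Put $Q_{\mathbf{k}^{[n]},j}:=A_{m+1,m+1-j}^{[n]}$, $j=0,\dots,m$. 1) If $\ell=0$, then $\deg A_{m+1,s}^{[n]}=k$ for all $s=1,\dots,m+1$, and $(Q_{\mathbf{k}^{[n]},0},\dots,Q_{\mathbf{k}^{[n]},m})$ is a tuple of Hermite–Padé polynomials of type I for $[f_0,\dots,f_m]$ and the multiindex $\mathbf{k}^{[n]}=(k,\dots,k)$, with order of tangency $(m+1)k+m=n+1$, i.e. $\sum_{j=0}^mQ_{\mathbf{k}^{[n]},j}f_j=O(z^{n+1})$. 2) If $\ell\in\{1,\dots,m\}$, then $\deg A_{m+1,m+1-s}^{[n]}=k+1$ for $s=0,\dots,\ell-1$ and $\deg A_{m+1,m+1-s}^{[n]}=k$ for $s=\ell,\dots,m$, and $(Q_{\mathbf{k}^{[n]},0},\dots,Q_{\mathbf{k}^{[n]},m})$ is a tuple of Hermite–Padé polynomials of type I for $[f_0,\dots,f_m]$ and the multiindex $\mathbf{k}^{[n]}=(\underbrace{k+1,\dots,k+1}_{\ell},\underbrace{k,\dots,k}_{m+1-\ell})$, with order of tangency $|\mathbf{k}^{[n]}|+m=(m+1)k+m+\ell=n+1$, i.e. $\sum_{j=0}^mQ_{\mathbf{k}^{[n]},j}f_j=O(z^{n+1})$. In both cases $\mathbf{k}^{[n]}=(k_0,\dots,k_m)$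 with $k_j=\deg A_{m+1,m+1-j}^{[n]}$ and $|\mathbf{k}^{[n]}|+m=n+1$.
   Context: For $g\in\mathbb{C}[[z]]$, $g=O(z^N)$ means the coefficients of $z^0,\dots,z^{N-1}$ vanish. For $\mathbf{k}=(k_0,\dots,k_m)\in\mathbb{Z}_+^{m+1}$, $|\mathbf{k}|=\sum k_j$, a tuple of polynomials $(Q_0,\dots,Q_m)$, not all zero, with $\deg Q_j\le k_j$ and $\sum_jQ_jf_j=O(z^{|\mathbf{k}|+m})$ is a tuple of Hermite–Padé polynomials of type I for $[f_0,\dots,f_m]$ and $\mathbf{k}$ ($|\mathbf{k}|+m$ is the order of tangency). Construction: put $f_j^{[0]}:=f_j$, $j=0,\dots,m$. Recursively for $n\ge0$: let $c_j^{[n]}$ be the constant term of $f_j^{[n]}$; $a_j^{[n]}:=-c_j^{[n]}/c_{j-1}^{[n]}$ ($j=1,\dots,m$); $f_m^{[n+1]}:=f_0^{[n]}$, $f_j^{[n+1]}:=z^{-1}(f_{j+1}^{[n]}+a_{j+1}^{[n]}f_j^{[n]})$ ($j=0,\dots,m-1$). $M^{[n]}$ is the $(m+1)\times(m+1)$ polynomial matrix whose first row is $(0,\dots,0,z)$ and whose $i$-th row, $i=2,\dots,m+1$, has $1$ in column $i-1$, $a_{m+2-i}^{[n]}$ in column $i$, zeros elsewhere; $A^{[n]}:=M^{[n]}\cdots M^{[0]}$ with entries $A_{i,s}^{[n]}\in\mathbb{C}[z]$. General position: all $c_j^{[n]}\neq0$, and for every $n\ge0$ and every entry of $A^{[n+1]}=M^{[n+1]}A^{[n]}$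 (a sum of at most two products of an entry of $M^{[n+1]}$ and an entry of $A^{[n]}$), the degree of the entry equals the maximum of the degrees of these products (zero polynomial has degree $-\infty$). *)

(* Complex numbers are modelled as R[i] = complex R for
   R : realType (a complete archimedean ordered field, i.e. the reals). *)
From HB Require Import structures.
From mathcomp Require Import all_boot all_order all_algebra.
From mathcomp Require Import complex.
From mathcomp Require Import reals.
Set Implicit Arguments. Unset Strict Implicit. Unset Printing Implicit Defensive.
Import Order.TTheory GRing.Theory Num.Theory.
Local Open Scope ring_scope.

Section HP.
Variable C : fieldType.

(* A formal power series in C[[z]] is its coefficient sequence nat -> C.
   A family f_0,...,f_m is given as f : nat -> (nat -> C); only j <= m matters. *)

Definition bigOz (g : nat -> C) (N : nat) : Prop := forall i, (i < N)%N -> g i = 0.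

Definition pmulS (p : {poly C}) (g : nat -> C) : nat -> C :=
  fun i => \sum_(t < i.+1) p`_t * g (i - t)%N.

Definition acoef (g : nat -> nat -> C) (j : nat) : C := - (g j 0%N) / (g j.-1 0%N).

Fixpoint fs (m : nat) (f : nat -> nat -> C) (n : nat) : nat -> nat -> C :=
  match n with
  | 0%N => f
  | n'.+1 => let g := fs m f n' in
      fun j i => if j == m then g 0%N i
                 else if (j < m)%N then g j.+1 i.+1 + acoef g j.+1 * g j i.+1
                 else 0
  end.

Definition an (m : nat) (f : nat -> nat -> C) (n j : nat) : C := acoef (fs m f n) j.

(* M^{[n]} (0-based indices): row 0 = (0,...,0,z); row i>=1 has 1 in column
   i-1 and a_{m+1-i}^{[n]} in column i. *)
Definition Mmat (m : nat) (f : nat -> nat -> C) (n : nat) : 'M[{poly C}]_m.+1 :=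
  \matrix_(i, j) if i == 0 :> nat then (if j == m :> nat then 'X else 0)
                 else if j == i.-1 :> nat then 1
                 else if j == i :> nat then (an m f n (m.+1 - i))%:P
                 else 0.

Fixpoint Amat (m : nat) (f : nat -> nat -> C) (n : nat) : 'M[{poly C}]_m.+1 :=
  match n with
  | 0%N => Mmat m f 0
  | n'.+1 => Mmat m f n *m Amat m f n'
  end.

(* Degrees are expressed through size (= deg + 1,
   size 0 = 0, corresponding to deg 0 = -oo), which is monotone, so
   "deg of entry = max of degs of the products" becomes the statement below;
   products with a zero entry of M^{[n+1]} have size 0 and do not affect the max. *)
Definition general_position (m : nat) (f : nat -> nat -> C) : Prop :=
  (forall n j, (j <= m)%N -> fs m f n j 0%N != 0) /\
  (forall n (i s : 'I_m.+1),
     size (Amat m f n.+1 i s) =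
     (\max_(t < m.+1) size (Mmat m f n.+1 i t * Amat m f n t s)%R)%N).

Definition HP_typeI (m : nat) (f : nat -> nat -> C) (kv : 'I_m.+1 -> nat)
    (Q : 'I_m.+1 -> {poly C}) : Prop :=
  [/\ exists j, Q j != 0,
      forall j, (size (Q j) <= (kv j).+1)%N
    & bigOz (fun i => \sum_(j < m.+1) pmulS (Q j) (f j) i)
            ((\sum_(j < m.+1) kv j) + m)%N].

End HP.

(* Both statements are invariants of the recursion A^{[n+1]} = M^{[n+1]} A^{[n]},
   whose rows transform very simply: row 0 becomes z times the last row, and
   row i > 0 becomes row (i-1) plus a_{m+1-i}^{[n+1]} times row i.

   Degrees.  [entry_size m t i s] is an explicit formula for the size
   (degree + 1) of the entry (i, s) of A^{[t-1]} (0-based indices).  It is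
   checked on M^{[0]} and shown to satisfy the same recursion as the sizes:
   since the a_j are nonzero, general position says that the size of row i > 0
   of A^{[n+1]} is the maximum of the sizes of rows i-1 and i of A^{[n]}.
   Evaluated on the last row when n+1 = m + (m+1)k + l, the formula gives the
   degrees k+1 (first l columns of Q) and k (the others).

   The linear forms L_r = sum_s A_{r,s} f_{m-s} of the rows of
   A^{[n]} equal z^{n+1} f^{[n+1]}_{m-r}; this is the recursive definition of
   the f^{[n]} read through the row operations above (a_j is chosen to cancel
   a constant term).  For the last row, sum_j Q_j f_j = O(z^{n+1}). *)

From mathcomp Require Import all_boot all_algebra.
From mathcomp Require Import complex reals zify.
Set Implicit Arguments. Unset Strict Implicit. Unset Printing Implicit Defensive.
Import GRing.Theory.

Definition grid_size (m thr y x : nat) : nat :=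
  if x + thr <= y then (y - x) %/ m.+1 + 1 else 0.

(* Predicted size of the entry (i, s) of A^{[t-1]}: the threshold is 0 on and
   below the diagonal outside row 0, and m+1 elsewhere. *)
Definition entry_size (m t i s : nat) : nat :=
  grid_size m (if (0 < i) && (s <= i) then 0 else m.+1) (t + s) i.

Lemma divn_addd x d : 0 < d -> (x + d) %/ d = x %/ d + 1.
Proof. by move=> d_gt0; have := divnDMl 1 x d_gt0; rewrite mul1n. Qed.

Lemma grid_size_mono m thr y y' x : y <= y' -> grid_size m thr y x <= grid_size m thr y' x.
Proof.
rewrite /grid_size => le_yy'; case: ifP => le_thr; last by [].
have -> : x + thr <= y' by lia.
by rewrite leq_add2r leq_div2r // leq_sub2r.
Qed.

Lemma grid_size_shift m thr y x : 0 < x -> grid_size m thr y x.-1 = grid_size m thr y.+1 x.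
Proof.
move=> x_gt0; rewrite /grid_size (_ : y.+1 - x = y - x.-1); last by lia.
by rewrite (_ : (x + thr <= y.+1) = (x.-1 + thr <= y)) //; lia.
Qed.

Lemma grid_size_max m thr y x : 0 < x ->
  maxn (grid_size m thr y x.-1) (grid_size m thr y x) = grid_size m thr y.+1 x.
Proof.
move=> x_gt0; rewrite grid_size_shift //; apply/maxn_idPl.
exact: grid_size_mono.
Qed.

Lemma grid_size_max_threshold m y x : 0 < x -> x <= y ->
  maxn (grid_size m m.+1 y x.-1) (grid_size m 0 y x) = grid_size m 0 y.+1 x.
Proof.
move=> x_gt0 le_xy; rewrite grid_size_shift // /grid_size !addn0 le_xy.
have -> : x <= y.+1 by lia.
case: ifP => [le_thr|/negbT lt_thr].
  by apply/maxn_idPl; rewrite leq_add2r leq_div2r // leq_sub2r.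
rewrite max0n !divn_small //; lia.
Qed.

Lemma entry_size_row0 m t s : 0 < t -> s <= m ->
  (if entry_size m t m s == 0 then 0 else (entry_size m t m s).+1)
  = entry_size m t.+1 0 s.
Proof.
move=> t_gt0 le_sm; rewrite /entry_size /grid_size add0n subn0.
case: m le_sm => [|m] le_sm.
  have -> : s = 0 by lia.
  by rewrite !divn1 !addn0 /= subn0 t_gt0 !addn1.
rewrite le_sm ltn0Sn addn0.
case: (leqP m.+1 (t + s)) => [le_mts|lt_tsm]; last first.
  by have -> : (m.+2 <= t.+1 + s) = false by lia.
have -> : m.+2 <= t.+1 + s by lia.
have -> : t.+1 + s = (t + s - m.+1) + m.+2 by lia.
by rewrite divn_addd // !addn1.
Qed.

Lemma entry_size_rowS m t i s : 0 < t -> 0 < i -> s <= m ->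
  maxn (entry_size m t i.-1 s) (entry_size m t i s) = entry_size m t.+1 i s.
Proof.
move=> t_gt0 i_gt0 le_sm; rewrite /entry_size addSn.
case: (boolP ((s == i) || ((i == 1) && (s == 0)))) => [diag|off_diag].
  have -> : (0 < i.-1) && (s <= i.-1) = false by lia.
  have -> : (0 < i) && (s <= i) = true by lia.
  by apply: grid_size_max_threshold => //; lia.
have -> : (0 < i.-1) && (s <= i.-1) = (0 < i) && (s <= i) by lia.
exact: grid_size_max.
Qed.

Lemma entry_size_last_row m k l j : l <= m -> j <= m -> 0 < m + m.+1 * k + l ->
  entry_size m (m + m.+1 * k + l) m (m - j) = (if j < l then k.+1 else k).+1.
Proof.
move=> le_lm le_jm t_gt0; rewrite /entry_size /grid_size.
have -> : m + (if (0 < m) && (m - j <= m) then 0 else m.+1)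
          <= m + m.+1 * k + l + (m - j) by case: ifP; lia.
have -> : m + m.+1 * k + l + (m - j) - m = k * m.+1 + (l + m - j) by lia.
rewrite divnMDl //.
case: ltnP => [lt_jl|le_lj]; last by rewrite divn_small ?addn0 ?addn1 //; lia.
have -> : l + m - j = (l + m - j - m.+1) + m.+1 by lia.
by rewrite divn_addd // divn_small ?add0n ?addn1 //; lia.
Qed.

Lemma entry_size_init m i s : i <= m -> s <= m ->
  entry_size m 1 i s = if i == 0 then (if s == m then 2 else 0)
                       else if (s == i.-1) || (s == i) then 1 else 0.
Proof.
move=> le_im le_sm; rewrite /entry_size /grid_size.
have [->|i_gt0] := posnP i.
  rewrite add0n subn0 add1n ltnS /=.
  have [->|ne_sm] := eqVneq s m; first by rewrite leqnn divnn.
  by have -> : (m <= s) = false by lia.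
rewrite /=; case: (leqP s i) => [le_si|lt_is]; last first.
  have -> : (i + m.+1 <= 1 + s) = false by lia.
  by have -> : (s == i.-1) || (s == i) = false by lia.
rewrite addn0; case: (boolP ((s == i.-1) || (s == i))) => near_diag.
  have -> : i <= 1 + s by lia.
  by rewrite divn_small //; lia.
by have -> : (i <= 1 + s) = false by lia.
Qed.

Lemma big_only2 (R : Type) (idx : R) (op : Monoid.com_law idx) (I : finType)
    (F : I -> R) (a b : I) :
  a != b -> (forall t, t != a -> t != b -> F t = idx) ->
  \big[op/idx]_t F t = op (F a) (F b).
Proof.
move=> neq_ab F_off; rewrite (bigD1 a) //= (big_only1 b) ?(eq_sym b) //.
by move=> t ne_tb ne_ta; apply: F_off.
Qed.

Local Open Scope ring_scope.

Lemma size_XM (C : nzRingType) (p : {poly C}) :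
  size ('X * p) = if size p == 0%N then 0%N else (size p).+1.
Proof.
have [->|p_nz] := eqVneq p 0; first by rewrite mulr0 size_poly0.
by rewrite -commr_polyX size_mulX // size_poly_eq0 (negbTE p_nz).
Qed.

Section Recursion.
Variables (C : fieldType) (m : nat) (f : nat -> nat -> C).

(* The row above i (meaningful for i > 0). *)
Definition row_pred (i : 'I_m.+1) : 'I_m.+1 := inord i.-1.

Lemma row_pred_val (i : 'I_m.+1) : row_pred i = i.-1 :> nat.
Proof. by rewrite inordK // (leq_ltn_trans (leq_pred i)). Qed.

Lemma row_pred_neq (i : 'I_m.+1) : (0 < i)%N -> row_pred i != i.
Proof. by move=> i_gt0; rewrite -(inj_eq val_inj) /= row_pred_val; lia. Qed.

Lemma Mmat_row0_last n (i : 'I_m.+1) : i = 0%N :> nat -> Mmat m f n i ord_max = 'X.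
Proof. by move=> i0; rewrite mxE i0 /= eqxx. Qed.

Lemma Mmat_row0_off n (i t : 'I_m.+1) : i = 0%N :> nat -> t != ord_max ->
  Mmat m f n i t = 0.
Proof.
by move=> i0; rewrite -(inj_eq val_inj) => ne_t; rewrite mxE i0 /= (negbTE ne_t).
Qed.

Lemma Mmat_rowS_pred n (i : 'I_m.+1) : (0 < i)%N -> Mmat m f n i (row_pred i) = 1.
Proof. by move=> i_gt0; rewrite mxE (negbTE (lt0n_neq0 i_gt0)) row_pred_val eqxx. Qed.

Lemma Mmat_rowS_diag n (i : 'I_m.+1) : (0 < i)%N ->
  Mmat m f n i i = (an m f n (m.+1 - i))%:P.
Proof.
move=> i_gt0; rewrite mxE (negbTE (lt0n_neq0 i_gt0)) eqxx.
by have -> : (i == i.-1 :> nat) = false by lia.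
Qed.

Lemma Mmat_rowS_off n (i t : 'I_m.+1) : (0 < i)%N -> t != row_pred i -> t != i ->
  Mmat m f n i t = 0.
Proof.
move=> i_gt0; rewrite -!(inj_eq val_inj) /= row_pred_val => ne_pred ne_i.
by rewrite mxE (negbTE (lt0n_neq0 i_gt0)) (negbTE ne_pred) (negbTE ne_i).
Qed.

Lemma mulMmat_row0 n (P : 'M[{poly C}]_m.+1) (i s : 'I_m.+1) : i = 0%N :> nat ->
  (Mmat m f n *m P) i s = 'X * P ord_max s.
Proof.
move=> i0; rewrite mxE (big_only1 ord_max) ?Mmat_row0_last // => t ne_t _.
by rewrite Mmat_row0_off // mul0r.
Qed.

Lemma mulMmat_rowS n (P : 'M[{poly C}]_m.+1) (i s : 'I_m.+1) : (0 < i)%N ->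
  (Mmat m f n *m P) i s = P (row_pred i) s + (an m f n (m.+1 - i))%:P * P i s.
Proof.
move=> i_gt0; rewrite mxE (big_only2 _ (row_pred_neq i_gt0)).
  by rewrite Mmat_rowS_pred ?Mmat_rowS_diag ?mul1r.
by move=> t ne_t1 ne_t2; rewrite Mmat_rowS_off // mul0r.
Qed.

Lemma pmulSD (p q : {poly C}) g i : pmulS (p + q) g i = pmulS p g i + pmulS q g i.
Proof. by rewrite /pmulS -big_split; apply: eq_bigr => t _; rewrite coefD mulrDl. Qed.

Lemma pmulS0 g i : pmulS (0 : {poly C}) g i = 0.
Proof. by rewrite /pmulS big1 // => t _; rewrite coef0 mul0r. Qed.

Lemma pmulS1 g i : pmulS (1 : {poly C}) g i = g i.
Proof.
rewrite /pmulS big_ord_recl coef1 mul1r subn0 big1 ?addr0 // => t _.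
by rewrite coef1 mul0r.
Qed.

Lemma pmulS_CM c (p : {poly C}) g i : pmulS (c%:P * p) g i = c * pmulS p g i.
Proof. by rewrite /pmulS mulr_sumr; apply: eq_bigr => t _; rewrite coefCM mulrA. Qed.

Lemma pmulS_XM (p : {poly C}) g i :
  pmulS ('X * p) g i = if i is i'.+1 then pmulS p g i' else 0.
Proof.
rewrite /pmulS big_ord_recl coefXM mul0r add0r.
case: i => [|i]; first by rewrite big_ord0.
by apply: eq_bigr => t _; rewrite coefXM /= subSS.
Qed.

Definition lin_form (P : 'M[{poly C}]_m.+1) (r : 'I_m.+1) : nat -> C :=
  fun i => \sum_(s < m.+1) pmulS (P r s) (f (m - s)) i.

Definition represents (P : 'M[{poly C}]_m.+1) (t : nat) : Prop :=
  forall r i, lin_form P r i = if (i < t)%N then 0 else fs m f t (m - r) (i - t).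

Lemma represents1 : represents 1 0.
Proof.
move=> r i; rewrite /lin_form (big_only1 r) ?mxE ?eqxx ?pmulS1 ?subn0 //.
by move=> t ne_tr _; rewrite mxE eq_sym (negbTE ne_tr) pmulS0.
Qed.

Hypothesis const_nz : forall n j, (j <= m)%N -> fs m f n j 0%N != 0.

Lemma an_neq0 n j : (0 < j <= m)%N -> an m f n j != 0.
Proof.
by case/andP=> j_gt0 le_jm; rewrite mulf_neq0 ?oppr_eq0 ?invr_eq0 ?const_nz //; lia.
Qed.

(* One step of the recursion: the three cases i < t, t < i, i = t are the
   vanishing low coefficients, the definition of f^{[t+1]}, and the choice of
   a_j^{[t]} killing the constant term. *)
Lemma represents_step P t : represents P t -> represents (Mmat m f t *m P) t.+1.
Proof.
move=> repP r i; rewrite /lin_form.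
have [r0|r_gt0] := posnP r.
  under eq_bigr => s _ do rewrite mulMmat_row0 // pmulS_XM.
  rewrite r0 subn0 /=; case: i => [|i]; first by rewrite big1.
  by have := repP ord_max i; rewrite /lin_form /= subnn => ->; rewrite ltnS subSS eqxx.
under eq_bigr => s _ do rewrite mulMmat_rowS // pmulSD pmulS_CM.
rewrite big_split -mulr_sumr /=.
have := repP (row_pred r) i; rewrite /lin_form => ->.
have := repP r i; rewrite /lin_form => ->.
have le_rm : (r <= m)%N by rewrite -ltnS.
rewrite row_pred_val (_ : (m - r.-1 = (m - r).+1)%N); last by lia.
rewrite (_ : (m.+1 - r = (m - r).+1)%N); last by lia.
case: (ltngtP i t) => [lt_it|lt_ti|->].
- by rewrite ltnS (ltnW lt_it) mulr0 addr0.
- rewrite ltnS leqNgt lt_ti /= (_ : (i - t = (i - t.+1).+1)%N); last by lia.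
  rewrite (_ : (m - r == m)%N = false); last by lia.
  by rewrite (_ : (m - r < m)%N = true); last by lia.
- rewrite ltnSn subnn /an /acoef -mulrA mulVf ?mulr1 ?subrr //.
  apply: const_nz; lia.
Qed.

Lemma represents_Amat n : represents (Amat m f n) n.+1.
Proof.
elim: n => [|n IH] /=; last exact: represents_step.
by rewrite -[Mmat _ _ _]mulmx1; apply/represents_step/represents1.
Qed.

Definition hp_tuple n (j : 'I_m.+1) : {poly C} := Amat m f n ord_max (inord (m - j)).

(* sum_j Q_j f_j = z^{n+1} f^{[n+1]}_0 = O(z^{n+1}). *)
Lemma hp_tuple_tangency n : bigOz (fun i => \sum_(j < m.+1) pmulS (hp_tuple n j) (f j) i) n.+1.
Proof.
move=> i lt_in; transitivity (lin_form (Amat m f n) ord_max i).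
  rewrite /lin_form (reindex_inj rev_ord_inj); apply: eq_bigr => j _.
  by rewrite /hp_tuple /= subSS subKn ?inord_val // -ltnS.
by rewrite represents_Amat lt_in.
Qed.

Lemma hp_tuple_typeI n (kv : 'I_m.+1 -> nat) :
  (forall j, size (hp_tuple n j) = (kv j).+1) -> ((\sum_(j < m.+1) kv j) + m = n.+1)%N ->
  HP_typeI f kv (hp_tuple n).
Proof.
move=> size_kv sum_kv; split.
- by exists ord0; rewrite -size_poly_eq0 size_kv.
- by move=> j; rewrite size_kv.
- by rewrite sum_kv; exact: hp_tuple_tangency.
Qed.

Lemma size_Mmat n (i s : 'I_m.+1) :
  size (Mmat m f n i s) = if i == 0 :> nat then (if s == m :> nat then 2 else 0)
                          else if (s == i.-1 :> nat) || (s == i :> nat) then 1 else 0.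
Proof.
have [i0|i_gt0] := posnP i.
  have [->|ne_s] := eqVneq s ord_max; first by rewrite Mmat_row0_last // size_polyX eqxx.
  rewrite Mmat_row0_off // size_poly0.
  by move: ne_s; rewrite -(inj_eq val_inj) => /negbTE->.
have [->|ne1] := eqVneq s (row_pred i).
  by rewrite Mmat_rowS_pred // size_poly1 row_pred_val eqxx.
have [->|ne2] := eqVneq s i.
  have le_im : (i <= m)%N by rewrite -ltnS.
  by rewrite Mmat_rowS_diag // size_polyC an_neq0 ?eqxx ?orbT //; lia.
rewrite Mmat_rowS_off // size_poly0.
by move: ne1 ne2; rewrite -!(inj_eq val_inj) /= row_pred_val => /negbTE-> /negbTE->.
Qed.

Hypothesis no_cancel : forall n (i s : 'I_m.+1),
  size (Amat m f n.+1 i s) =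
  (\max_(t < m.+1) size (Mmat m f n.+1 i t * Amat m f n t s)%R)%N.

Lemma size_Amat n (i s : 'I_m.+1) : size (Amat m f n i s) = entry_size m n.+1 i s.
Proof.
elim: n i s => [|n IH] i s; first by rewrite size_Mmat entry_size_init // -ltnS.
rewrite no_cancel; have [i0|i_gt0] := posnP i.
  rewrite (big_only1 ord_max) ?Mmat_row0_last // ?size_XM ?IH.
    by rewrite i0; apply: entry_size_row0; rewrite // -ltnS.
  by move=> t ne_t _; rewrite Mmat_row0_off // mul0r size_poly0.
rewrite (big_only2 _ (row_pred_neq i_gt0)).
  rewrite Mmat_rowS_pred ?Mmat_rowS_diag // mul1r size_Cmul ?IH ?row_pred_val.
    by apply: entry_size_rowS; rewrite // -ltnS.
  have le_im : (i <= m)%N by rewrite -ltnS.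
  by apply: an_neq0; lia.
by move=> t ne_t1 ne_t2; rewrite Mmat_rowS_off // mul0r size_poly0.
Qed.

Lemma size_last_row n k l (s : 'I_m.+1) : (l <= m)%N -> n.+1 = (m + m.+1 * k + l)%N ->
  size (Amat m f n ord_max s) = (if (m - s < l)%N then k.+1 else k).+1.
Proof.
move=> le_lm def_n; have le_sm : (s <= m)%N by rewrite -ltnS.
rewrite size_Amat def_n -[in entry_size _ _ _ s](subKn le_sm).
by rewrite entry_size_last_row ?leq_subr // -def_n.
Qed.

Lemma size_hp_tuple n k l (j : 'I_m.+1) : (l <= m)%N -> n.+1 = (m + m.+1 * k + l)%N ->
  size (hp_tuple n j) = (if (j < l)%N then k.+1 else k).+1.
Proof.
move=> le_lm def_n; have le_jm : (j <= m)%N by rewrite -ltnS.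
by rewrite /hp_tuple (size_last_row _ le_lm def_n) inordK ?subKn // ltnS leq_subr.
Qed.

End Recursion.

Lemma sum_multiindex N k l :
  (\sum_(j < N) (if (j < l)%N then k.+1 else k) = N * k + minn N l)%N.
Proof.
elim: N => [|N IH]; first by rewrite big_ord0 mul0n min0n.
by rewrite big_ord_recr /= IH mulSnr; case: ifP => lt_Nl; lia.
Qed.

Unset Implicit Arguments.

Theorem theorem3 (R : realType) (m : nat) (f : nat -> nat -> R[i])
  (Hgp : general_position m f) (n k l : nat)
  (Hl : (l <= m)%N) (Hn : n.+1 = (m + m.+1 * k + l)%N) :
  let Q := fun j : 'I_m.+1 => Amat m f n ord_max (inord (m - j)) in
  let kv := fun j : 'I_m.+1 => if (j < l)%N then k.+1 else k in
  (l = 0%N ->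
     (forall s : 'I_m.+1, size (Amat m f n ord_max s) = k.+1) /\
     @HP_typeI _ m f (fun _ => k) Q) /\
  ((0 < l)%N ->
     (forall s : 'I_m.+1, (s < l)%N -> size (Q s) = k.+2) /\
     (forall s : 'I_m.+1, (l <= s)%N -> size (Q s) = k.+1) /\
     @HP_typeI _ m f kv Q) /\
  (forall j : 'I_m.+1, size (Q j) = (kv j).+1) /\
  ((\sum_(j < m.+1) kv j) + m = n.+1)%N.
Proof.
move=> Q kv; have [const_nz no_cancel] := Hgp.
have size_Q (j : 'I_m.+1) : size (Q j) = (kv j).+1 := size_hp_tuple const_nz no_cancel j Hl Hn.
have sum_kv : ((\sum_(j < m.+1) kv j) + m = n.+1)%N by rewrite sum_multiindex Hn; lia.
split; [|split; [|split]] => //.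
- move=> l0; split=> [s|].
    by rewrite (size_last_row const_nz no_cancel s Hl Hn) l0.
  apply: (hp_tuple_typeI const_nz) => [j|]; first by rewrite size_Q /kv l0.
  by rewrite -sum_kv /kv l0.
- move=> l_gt0; split; [|split].
  + by move=> s lt_sl; rewrite size_Q /kv lt_sl.
  + by move=> s le_ls; rewrite size_Q /kv ltnNge le_ls.
  exact: (hp_tuple_typeI const_nz).
Qed.
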